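(* Let $A$ be a commutative ring over $\mathbf F_p$ with an action of a cyclic group $\langle\sigma\rangle$ of order $p$, let $N\cdot A=\{(1+\sigma+\dots+\sigma^{p-1})a: a\in A\}$ and $\mathrm{Nm}(a)=a\,\sigma(a)\cdots\sigma^{p-1}(a)$. Let $A'\subset A^\sigma$ be a subring containing $\mathrm{Nm}(A)$ and $N\cdot A$ (so $N\cdot A$ is an ideal of $A'$). Then every ring homomorphism $\chi\colon A'\to k$ that vanishes on $N\cdot A$ extends uniquely to a ring homomorphism $\tilde\chi\colon A\to k$, and this extension is given by $\tilde\chi(a)=\chi(\mathrm{Nm}(a))^{1/p}$.
   Context: $k$ is an algebraic closure of $\mathbf F_p$ (so $p$-th roots are unique); $A^\sigma$ denotes the $\sigma$-invariants of $A$. *)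

From HB Require Import structures.
From mathcomp Require Import all_boot all_order all_algebra.
Set Implicit Arguments. Unset Strict Implicit. Unset Printing Implicit Defensive.
Import GRing.Theory.
Local Open Scope ring_scope.

Definition normsum (A : comNzRingType) (s : A -> A) (p : nat) (a : A) : A :=
  \sum_(i < p) iter i s a.

Definition Nm (A : comNzRingType) (s : A -> A) (p : nat) (a : A) : A :=
  \prod_(i < p) iter i s a.

Definition algebraic_over_prime_field (k : fieldType) : Prop :=
  forall x : k, exists q : {poly k},
    q != 0 /\ (forall i, exists n : nat, q`_i = n%:R) /\ root q x.

From HB Require Import structures.
From mathcomp Require Import all_boot all_order all_algebra.
Set Implicit Arguments. Unset Strict Implicit. Unset Printing Implicit Defensive.
Import GRing.Theory.
Local Open Scope ring_scope.

(* The norm is multiplicative, and in characteristic p it is additive modulo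
   traces: expanding Nm (a + b) = \prod_i (s^i a + s^i b) over the subsets X of
   Z/p, the terms with X <> set0, setT fall into free rotation orbits, and each
   orbit sums to a trace.  Hence chi \o Nm is a ring morphism A -> k, and
   composing it with the inverse of the Frobenius of k gives the extension.
   For uniqueness, the same expansion in A[X] gives
   Nm ('X + a) = 'X^p + Nm a + (a polynomial with trace coefficients); at -a the
   left side vanishes, so psi a ^+ p = psi (Nm a) for every ring morphism psi
   that kills traces. *)

Lemma natr_egcdn_pchar (R : nzSemiRingType) p k :
  p \in [pchar R] -> (0 < k)%N -> coprime k p -> ((egcdn k p).1 * k)%:R = 1 :> R.
Proof.
move=> pcharRp k_gt0 /eqP co_kp; case: egcdnP => // km kn -> _.
by rewrite co_kp natrD natrM (pcharf0 pcharRp) mulr0 add0r.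
Qed.

Section IterRMorphism.
Variables (R : pzRingType) (f : {rmorphism R -> R}).

Lemma iter_rmorphD i : {morph iter i f : x y / x + y}.
Proof. by elim: i => // i IH x y /=; rewrite IH rmorphD. Qed.

Lemma iter_rmorphM i : {morph iter i f : x y / x * y}.
Proof. by elim: i => // i IH x y /=; rewrite IH rmorphM. Qed.

Lemma iter_rmorph1 i : iter i f 1 = 1.
Proof. by elim: i => //= i ->; rewrite rmorph1. Qed.

Lemma iter_rmorph_nat i m : iter i f m%:R = m%:R.
Proof. by elim: i => //= i ->; rewrite rmorph_nat. Qed.

Lemma iter_rmorph_sum i I r (P : pred I) (F : I -> R) :
  iter i f (\sum_(j <- r | P j) F j) = \sum_(j <- r | P j) iter i f (F j).
Proof. exact: (big_morph _ (iter_rmorphD i) (iter_rmorph_nat i 0)). Qed.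

Lemma iter_rmorph_prod i I r (P : pred I) (F : I -> R) :
  iter i f (\prod_(j <- r | P j) F j) = \prod_(j <- r | P j) iter i f (F j).
Proof. exact: (big_morph _ (iter_rmorphM i) (iter_rmorph1 i)). Qed.

End IterRMorphism.

Section NormOfSum.
Variables (A : comNzRingType) (n : nat) (s : {rmorphism A -> A}).
Local Notation p := n.+1.
Hypotheses (s_order : forall a, iter p s a = a) (A_pchar : p \in [pchar A]).

Lemma iter_modn i a : iter i s a = iter (i %% p) s a.
Proof.
rewrite {1}(divn_eq i p) iterD; elim: (i %/ p)%N => // m IH.
by rewrite mulSn iterD s_order.
Qed.

Lemma iter_ord_add (i j : 'I_p) a : iter j s (iter i s a) = iter (i + j)%R s a.
Proof. by rewrite -iterD addnC iter_modn. Qed.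

Definition rot (j : 'I_p) (X : {set 'I_p}) : {set 'I_p} := (fun i => i - j) @^-1: X.

Lemma mem_rot j X i : (i \in rot j X) = (i - j \in X).
Proof. by rewrite inE. Qed.

Lemma rotK j : cancel (rot (- j)) (rot j).
Proof. by move=> X; apply/setP => i; rewrite !mem_rot opprK subrK. Qed.

Lemma card_rot j X : #|rot j X| = #|X|.
Proof. exact/card_preimset/addIr. Qed.

Lemma sum_rot_normsum (F : {set 'I_p} -> A) :
    (forall (j : 'I_p) X, iter j s (F X) = F (rot j X)) ->
  exists y, \sum_(X : {set 'I_p} | (0 < #|X| < p)%N) F X = normsum s p y.
Proof.
(* Exactly #|X| of the p rotations of X contain 0, so weighting F X by
   [0 \in X] / #|X| (the inverse read off egcdn) recovers F X from its trace. *)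
move=> F_rot; pose w (X : {set 'I_p}) := ((egcdn #|X| p).1 * (0 \in X))%:R : A.
exists (\sum_(X : {set 'I_p} | (0 < #|X| < p)%N) w X * F X).
apply/esym; rewrite /normsum.
under eq_bigr => j _.
  rewrite iter_rmorph_sum (reindex_inj (can_inj (rotK j))) /=.
  under eq_big => [X | X _].
  - by rewrite card_rot; over.
  - by rewrite iter_rmorphM iter_rmorph_nat F_rot rotK /w card_rot mem_rot sub0r opprK; over.
  over.
rewrite /= exchange_big /=; apply: eq_bigr => X /andP[X_gt0 X_ltp].
rewrite -mulr_suml -[RHS]mul1r; congr (_ * _).
under eq_bigr => j _ do rewrite natrM.
rewrite -mulr_sumr -natr_sum -natrM.
have -> : (\sum_(j < p) (j \in X))%N = #|X|.
  by rewrite -sum1_card [RHS]big_mkcond; apply: eq_bigr => j _; case: (j \in X).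
apply: natr_egcdn_pchar => //.
by rewrite coprime_sym prime_coprime ?(pcharf_prime A_pchar) // gtnNdvd.
Qed.

Lemma NmM x y : Nm s p (x * y) = Nm s p x * Nm s p y.
Proof. by rewrite /Nm -big_split; apply: eq_bigr => i _; rewrite iter_rmorphM. Qed.

Lemma Nm1 : Nm s p 1 = 1.
Proof. by rewrite /Nm big1 // => i _; rewrite iter_rmorph1. Qed.

Lemma Nm_fixed x : s x = x -> Nm s p x = x ^+ p.
Proof.
move=> sx; rewrite /Nm (eq_bigr (fun _ => x)) ?prodr_const ?card_ord // => i _.
by elim: (i : nat) => //= m ->.
Qed.

Lemma card_set_ord_nontrivial (X : {set 'I_p}) :
  (0 < #|X| < p)%N = (X != setT) && (X != set0).
Proof. by rewrite card_gt0 -properT properEcard subsetT cardsT card_ord andbC. Qed.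

Lemma Nm_add a b : exists y, Nm s p (a + b) = Nm s p a + Nm s p b + normsum s p y.
Proof.
pose V (X : {set 'I_p}) := \prod_(i < p) iter i s (if i \in X then a else b).
have V_rot (j : 'I_p) X : iter j s (V X) = V (rot j X).
  rewrite iter_rmorph_prod [RHS](reindex_inj (addIr j)) /=.
  by apply: eq_bigr => i _; rewrite iter_ord_add mem_rot addrK.
have [y Ey] := sum_rot_normsum V_rot; exists y.
have -> : Nm s p (a + b) = \sum_(X : {set 'I_p}) V X.
  rewrite /Nm; under eq_bigr do rewrite iter_rmorphD.
  by rewrite bigA_distr; apply: eq_bigr => X _; apply: eq_bigr => i _; case: (i \in X).
have set0_neqT : set0 != [set: 'I_p] by rewrite eq_sym -card_gt0 cardsT card_ord.
rewrite (bigD1 setT) // (bigD1 set0) //= !addrA -Ey.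
congr (_ + _ + _).
- by apply: eq_bigr => i _; rewrite in_setT.
- by apply: eq_bigr => i _; rewrite in_set0.
- by apply: eq_bigl => X; rewrite card_set_ord_nontrivial andbC.
Qed.

End NormOfSum.

Section IterMapPoly.
Variables (R : nzRingType) (f : {rmorphism R -> R}).

Lemma coef_iter_map_poly i q j : (iter i (map_poly f) q)`_j = iter i f q`_j.
Proof. by elim: i => //= i <-; rewrite coef_map. Qed.

Lemma iter_map_polyX i : iter i (map_poly f) 'X = 'X.
Proof. by elim: i => //= i ->; rewrite map_polyX. Qed.

Lemma iter_map_polyC i c : iter i (map_poly f) c%:P = (iter i f c)%:P.
Proof. by elim: i => //= i ->; rewrite map_polyC. Qed.

End IterMapPoly.

Section NormPower.
Variables (A : comNzRingType) (n : nat) (s : {rmorphism A -> A}).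
Local Notation p := n.+1.
Hypotheses (s_order : forall a, iter p s a = a) (A_pchar : p \in [pchar A]).

Lemma rmorph_exp_Nm (K : nzRingType) (psi : {rmorphism A -> K}) :
  (forall y, psi (normsum s p y) = 0) -> forall a, psi a ^+ p = psi (Nm s p a).
Proof.
move=> psiN a; pose sX := map_poly s : {rmorphism {poly A} -> {poly A}}.
have sX_order q : iter p sX q = q.
  by apply/polyP => j; rewrite coef_iter_map_poly s_order.
have sX_pchar : p \in [pchar {poly A}] by rewrite pchar_poly.
have [w Ew] := Nm_add sX_order sX_pchar 'X a%:P.
have NmX : Nm sX p 'X = 'X^p.
  by rewrite /Nm (eq_bigr (fun _ => 'X)) ?prodr_const ?card_ord // => i _;
    rewrite iter_map_polyX.
have NmC : Nm sX p a%:P = (Nm s p a)%:P.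
  by rewrite /Nm rmorph_prod; apply: eq_bigr => i _; rewrite iter_map_polyC.
have root_Nm : (Nm sX p ('X + a%:P)).[- a] = 0.
  by rewrite /Nm horner_prod (bigD1 ord0) //= !hornerE addNr mul0r.
have psi_trace : psi (normsum sX p w).[- a] = 0.
  rewrite horner_coef rmorph_sum big1 // => i _.
  rewrite rmorphM /normsum coef_sum.
  under eq_bigr do rewrite coef_iter_map_poly.
  by rewrite -/(normsum s p _) psiN mul0r.
move: Ew => /(congr1 (fun q => psi q.[- a])).
rewrite root_Nm rmorph0 NmX NmC !hornerE rmorphD psi_trace addr0 rmorphD.
rewrite -(pFrobenius_autE A_pchar) pFrobenius_autN pFrobenius_autE rmorphN rmorphXn.
by move/eqP; rewrite eq_sym addrC subr_eq0 => /eqP.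
Qed.

End NormPower.

Section NormCharacter.
Variables (A : comNzRingType) (n : nat) (s : {rmorphism A -> A}).
Local Notation p := n.+1.
Hypotheses (s_order : forall a, iter p s a = a) (A_pchar : p \in [pchar A]).
Variables (K : nzRingType) (S : {pred A}) (chi : A -> K).
Hypotheses (S_add : {in S &, forall x y, x + y \in S}).
Hypotheses (S_Nm : forall a, Nm s p a \in S) (S_N : forall a, normsum s p a \in S).
Hypotheses (chi1 : chi 1 = 1) (chi_N : forall a, chi (normsum s p a) = 0).
Hypotheses (chiD : {in S &, {morph chi : x y / x + y}}).
Hypotheses (chiM : {in S &, {morph chi : x y / x * y}}).

Lemma chi_Nm_additive : {morph chi \o Nm s p : x y / x + y}.
Proof.
move=> x y /=; have [w ->] := Nm_add s_order A_pchar x y.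
by rewrite !chiD ?S_add // chi_N addr0.
Qed.

Lemma chi_Nm_zmod_morphism : zmod_morphism (chi \o Nm s p).
Proof. by move=> x y; apply/eqP; rewrite eq_sym subr_eq -chi_Nm_additive subrK. Qed.

Lemma chi_Nm_monoid_morphism : monoid_morphism (chi \o Nm s p).
Proof. by split=> [|x y] /=; rewrite ?Nm1 ?NmM ?chiM. Qed.

End NormCharacter.

Lemma exists_rmorphism (R T : pzRingType) (f : R -> T) :
  zmod_morphism f -> monoid_morphism f -> exists g : {rmorphism R -> T}, g =1 f.
Proof.
move=> fB fM.
pose g : {rmorphism R -> T} := HB.pack f (GRing.isZmodMorphism.Build R T f fB)
                                        (GRing.isMonoidMorphism.Build R T f fM).
by exists g.
Qed.

Section PthRoot.
Variables (k : closedFieldType) (p : nat) (k_pchar : p \in [pchar k]).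

Lemma pchar_exp_inj : injective (fun x : k => x ^+ p).
Proof. exact: (fmorph_inj (pFrobenius_aut k_pchar)). Qed.

Lemma exists_proot (c : k) : exists x : k, x ^+ p == c.
Proof.
have p_gt0 := prime_gt0 (pcharf_prime k_pchar).
have /closed_rootP[x] : size ('X^p - c%:P) != 1%N by rewrite size_XnsubC -?lt0n.
by rewrite rootE !hornerE subr_eq0; exists x.
Qed.

Definition proot (c : k) : k := xchoose (exists_proot c).

Lemma prootK c : proot c ^+ p = c.
Proof. exact/eqP/(xchooseP (exists_proot c)). Qed.

Lemma proot_exp x : proot (x ^+ p) = x.
Proof. by apply: pchar_exp_inj; rewrite /= prootK. Qed.

Fact proot_is_zmod_morphism : zmod_morphism proot.
Proof.
move=> x y; apply: pchar_exp_inj => /=.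
by rewrite -!(pFrobenius_autE k_pchar) rmorphB /= !pFrobenius_autE !prootK.
Qed.

Fact proot_is_monoid_morphism : monoid_morphism proot.
Proof.
split=> [|x y]; apply: pchar_exp_inj => /=; first by rewrite prootK expr1n.
by rewrite exprMn !prootK.
Qed.

End PthRoot.

HB.instance Definition _ (k : closedFieldType) p (k_pchar : p \in [pchar k]) :=
  GRing.isZmodMorphism.Build k k (proot k_pchar) (proot_is_zmod_morphism k_pchar).
HB.instance Definition _ (k : closedFieldType) p (k_pchar : p \in [pchar k]) :=
  GRing.isMonoidMorphism.Build k k (proot k_pchar) (proot_is_monoid_morphism k_pchar).

Theorem lemma5p16
  (p : nat) (p_prime : prime p)
  (k : closedFieldType) (k_char : p \in [pchar k])
  (k_alg : algebraic_over_prime_field k)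
  (A : comNzRingType) (A_char : (p%:R : A) = 0)
  (sigma : {rmorphism A -> A}) (sigma_order : forall a : A, iter p sigma a = a)
  (S : {pred A})
  (S1 : 1 \in S)
  (SB : forall x y, x \in S -> y \in S -> x - y \in S)
  (SM : forall x y, x \in S -> y \in S -> x * y \in S)
  (S_inv : forall x, x \in S -> sigma x = x)
  (S_Nm : forall a, Nm sigma p a \in S)
  (S_N : forall a, normsum sigma p a \in S)
  (chi : A -> k)
  (chi1 : chi 1 = 1)
  (chiD : forall x y, x \in S -> y \in S -> chi (x + y) = chi x + chi y)
  (chiM : forall x y, x \in S -> y \in S -> chi (x * y) = chi x * chi y)
  (chi_N : forall a, chi (normsum sigma p a) = 0) :
  exists chit : {rmorphism A -> k},
    [/\ (forall x, x \in S -> chit x = chi x),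
        (forall psi : {rmorphism A -> k},
            (forall x, x \in S -> psi x = chi x) -> forall a, psi a = chit a)
      & (forall a, chit a ^+ p = chi (Nm sigma p a))].
Proof.
case: p => [//|n] in p_prime k_char A_char sigma_order S_Nm S_N chi_N *.
have A_pchar : n.+1 \in [pchar A] by rewrite inE p_prime A_char eqxx.
have S_add : {in S &, forall x y, x + y \in S}.
  by move=> x y xS yS; rewrite -[y]opprK SB // -sub0r SB // -(subrr 1) SB.
have S_exp x m : x \in S -> x ^+ m \in S.
  by move=> xS; elim: m => [|m IH]; rewrite ?expr0 ?exprS ?SM.
have chiX x m : x \in S -> chi (x ^+ m) = chi x ^+ m.
  by move=> xS; elim: m => [|m IH]; rewrite ?expr0 ?exprS ?chiM ?S_exp ?IH.
have [g gE] := exists_rmorphism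
  (chi_Nm_zmod_morphism sigma_order A_pchar S_add S_Nm S_N chi_N chiD)
  (chi_Nm_monoid_morphism S_Nm chi1 chiM).
exists (proot k_char \o g); split=> [x xS | psi psi_chi a | a] /=.
- by rewrite gE /= Nm_fixed ?S_inv // chiX // proot_exp.
- apply: (pchar_exp_inj k_char); rewrite /= prootK gE /=.
  by rewrite (rmorph_exp_Nm sigma_order A_pchar) ?psi_chi // => y; rewrite psi_chi.
- by rewrite prootK gE.
Qed.
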